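(* Let $d\in\mathbb{N}$, $0<\lambda<1$, $0\le\epsilon<1$, and let $\mathrm{score}(d',b)$ for $d'\in\{0,\dots,d\}$, $b\in\{0,1\}$ be as defined in the context. Then the global maximizer of $\mathrm{score}$ over $d'\in\{0,\dots,d\}$, $b\in\{0,1\}$ is as follows: (a) if $0\le\epsilon\le\frac{\lambda(\lambda(d-2)+4)}{2(\lambda(d-1)+2)}$, it is $d'=d$, $b=1$; (b) if $\epsilon=\frac{\lambda(d-1)+2}{2d}$, it is $d'=d$, $b=1$; (c) if $\epsilon\ge\frac{\lambda}{2}+\frac32\,\frac{2-\lambda}{\lambda^2(d-1)+3}$, it is $d'=0$, $b=0$.
   Context: Let $\phi(x):=\max(0,x)$, $\epsilon_+:=1-\epsilon$, $\epsilon_-:=\lambda/2-\epsilon$. Define $r_1:=\epsilon_++\frac{\lambda^2}{3}(d-1)\epsilon_-$, $r_2:=\epsilon_-+\frac{\lambda^2}{3}\epsilon_++\frac{\lambda^2}{3}(d-2)\epsilon_-$, $r_3:=\epsilon_++\frac{\lambda}{2}(d-1)\epsilon_-$, $r_4:=\epsilon_-+\frac{\lambda}{2}\epsilon_++\frac{\lambda}{2}(d-2)\epsilon_-$, $r_5:=\frac{\lambda}{2}\epsilon_++\frac{\lambda}{2}\epsilon_-+\frac{\lambda^2}{4}(d-2)\epsilon_-$, $r_6:=\lambda\epsilon_-+\frac{\lambda^2}{4}\epsilon_++\frac{\lambda^2}{4}(d-3)\epsilon_-$, $r_7:=\epsilon_++(d-1)\epsilon_-$. For $d'\in\{0,\dots,d\}$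 and $b\in\{0,1\}$ define $s_1:=br_7+r_3+(d'-1)r_4$, $s_2:=br_7+d'r_4$, $s_3:=br_3+r_1+(d'-1)r_5$, $s_4:=br_3+d'r_5$, $s_5:=br_4+r_2+r_5+(d'-2)r_6$, $s_6:=br_4+r_2+(d'-1)r_6$, $s_7:=br_4+r_5+(d'-1)r_6$, $s_8:=br_4+d'r_6$ (each a function of $(d',b)$), and $$\mathrm{score}(d',b):=d'\phi(s_1)+(d-d')\phi(s_2)+d'\phi(s_3)+(d-d')\phi(s_4)+d'(d'-1)\phi(s_5)+d'(d-d')\phi(s_6)+d'(d-d')\phi(s_7)+(d-d')(d-d'-1)\phi(s_8).$$ *)

From mathcomp Require Import all_boot all_order all_algebra.
Set Implicit Arguments. Unset Strict Implicit. Unset Printing Implicit Defensive.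
Import Order.TTheory GRing.Theory Num.Theory.
Local Open Scope ring_scope.

Definition phi (R : realFieldType) (x : R) : R := Num.max 0 x.

(* score(d', b) for parameters lambda, epsilon, d; all arithmetic in R
   (in particular d-1, d-2, d-3, d'-1, d'-2, d-d' are real differences). *)
Definition score (R : realFieldType) (lam eps : R) (d d' : nat) (b : bool) : R :=
  let dR := d%:R in
  let dp := d'%:R in
  let bR : R := (b : nat)%:R in
  let ep := 1 - eps in
  let em := lam / 2 - eps in
  let r1 := ep + lam ^+ 2 / 3 * (dR - 1) * em in
  let r2 := em + lam ^+ 2 / 3 * ep + lam ^+ 2 / 3 * (dR - 2) * em in
  let r3 := ep + lam / 2 * (dR - 1) * em in
  let r4 := em + lam / 2 * ep + lam / 2 * (dR - 2) * em in
  let r5 := lam / 2 * ep + lam / 2 * em + lam ^+ 2 / 4 * (dR - 2) * em in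
  let r6 := lam * em + lam ^+ 2 / 4 * ep + lam ^+ 2 / 4 * (dR - 3) * em in
  let r7 := ep + (dR - 1) * em in
  let s1 := bR * r7 + r3 + (dp - 1) * r4 in
  let s2 := bR * r7 + dp * r4 in
  let s3 := bR * r3 + r1 + (dp - 1) * r5 in
  let s4 := bR * r3 + dp * r5 in
  let s5 := bR * r4 + r2 + r5 + (dp - 2) * r6 in
  let s6 := bR * r4 + r2 + (dp - 1) * r6 in
  let s7 := bR * r4 + r5 + (dp - 1) * r6 in
  let s8 := bR * r4 + dp * r6 in
  dp * phi s1 + (dR - dp) * phi s2 + dp * phi s3 + (dR - dp) * phi s4
  + dp * (dp - 1) * phi s5 + dp * (dR - dp) * phi s6 + dp * (dR - dp) * phi s7
  + (dR - dp) * (dR - dp - 1) * phi s8.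

Definition is_global_maximizer (R : realFieldType) (lam eps : R) (d d0 : nat)
  (b0 : bool) : Prop :=
  (d0 <= d)%N /\
  forall (d' : nat) (b : bool), (d' <= d)%N -> score lam eps d d' b <= score lam eps d d0 b0.

From mathcomp Require Import all_boot all_order all_algebra.
From mathcomp Require Import ring lra.
Import Order.TTheory GRing.Theory Num.Theory.
Set Implicit Arguments. Unset Strict Implicit. Unset Printing Implicit Defensive.
Local Open Scope ring_scope.

(* Write the score in terms of the coefficients r_1, ..., r_7, with x = d', t = d - d', and b
   relaxed to a real in [0, 1].
   (c) Above the threshold every r_i is nonpositive, so every phi term vanishes and all scores
   are 0.
   (a) Below the threshold r_4 >= 0. Each further inequality needed on the r_i is affine in
   eps and holds at eps = 0 and at the threshold, hence is a nonnegative combination of r_4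
   and eps with coefficients polynomial in d - 1. Given them, the score increases with b, its
   first four terms fall short of their value at (d, 1) by exactly t * K for some K >= 0,
   and by a case analysis on the signs of the two phi arguments that remain, its last four
   terms exceed their value at (d, 1) by at most t * K.
   (b) At the critical eps every r_i is (eps - lam / 2) times an explicit coefficient, and
   the comparison with (d, 1) reduces to x * max(0, t - x) <= t * (x + t - 2) for naturals
   with x + t >= 2. *)

Section Phi.
Variable R : realFieldType.
Implicit Types x y : R.

Lemma phi_ge0 x : 0 <= phi x.
Proof. by rewrite /phi le_max lexx. Qed.

Lemma ger0_phi x : 0 <= x -> phi x = x.
Proof. exact: max_r. Qed.

Lemma ler0_phi x : x <= 0 -> phi x = 0.
Proof. exact: max_l. Qed.

Lemma le_phi x y : x <= y -> phi x <= phi y.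
Proof. by move=> le_xy; rewrite /phi ge_max le_max lexx le_max le_xy orbT. Qed.

Lemma ler_wpM2l_phi (w x y : R) : 0 <= w -> x <= y -> w * phi x <= w * phi y.
Proof. by move=> w_ge0 /le_phi; apply: ler_wpM2l. Qed.

Lemma phiZ (u x : R) : 0 <= u -> phi (u * x) = u * phi x.
Proof. by move=> u_ge0; rewrite /phi maxr_pMr // mulr0. Qed.

End Phi.

Definition is_natr (R : realFieldType) (x : R) := exists n : nat, x = n%:R.

Lemma is_natr_cases (R : realFieldType) (x : R) :
  is_natr x -> [\/ x = 0, x = 1 | 2 <= x].
Proof.
case=> [[|[|n]] ->]; [exact: Or31 | exact: Or32 | apply: Or33].
by rewrite -addn2 natrD; have := ler0n R n; lra.
Qed.

Lemma is_natr_ge0 (R : realFieldType) (x : R) : is_natr x -> 0 <= x.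
Proof. by case=> n ->; apply: ler0n. Qed.

Lemma is_natr_mulrB1_ge0 (R : realFieldType) (x : R) : is_natr x -> 0 <= x * (x - 1).
Proof. by case/is_natr_cases=> [->|->|]; nra. Qed.

Section Coefficients.
Variables (R : realFieldType) (lam eps dR : R).

Definition rho1 := (1 - eps) + lam ^+ 2 / 3 * (dR - 1) * (lam / 2 - eps).
Definition rho2 :=
  (lam / 2 - eps) + lam ^+ 2 / 3 * (1 - eps) + lam ^+ 2 / 3 * (dR - 2) * (lam / 2 - eps).
Definition rho3 := (1 - eps) + lam / 2 * (dR - 1) * (lam / 2 - eps).
Definition rho4 :=
  (lam / 2 - eps) + lam / 2 * (1 - eps) + lam / 2 * (dR - 2) * (lam / 2 - eps).
Definition rho5 :=
  lam / 2 * (1 - eps) + lam / 2 * (lam / 2 - eps) + lam ^+ 2 / 4 * (dR - 2) * (lam / 2 - eps).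
Definition rho6 :=
  lam * (lam / 2 - eps) + lam ^+ 2 / 4 * (1 - eps) + lam ^+ 2 / 4 * (dR - 3) * (lam / 2 - eps).
Definition rho7 := (1 - eps) + (dR - 1) * (lam / 2 - eps).

End Coefficients.

Section ScoreParts.
Variables (R : realFieldType) (x t b : R).

Definition score_lin (r1 r3 r4 r5 r7 : R) :=
  x * phi (b * r7 + r3 + (x - 1) * r4) + t * phi (b * r7 + x * r4)
  + x * phi (b * r3 + r1 + (x - 1) * r5) + t * phi (b * r3 + x * r5).

Definition score_quad (r2 r4 r5 r6 : R) :=
  x * (x - 1) * phi (b * r4 + r2 + r5 + (x - 2) * r6)
  + x * t * phi (b * r4 + r2 + (x - 1) * r6)
  + x * t * phi (b * r4 + r5 + (x - 1) * r6) + t * (t - 1) * phi (b * r4 + x * r6).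

End ScoreParts.

Lemma scoreE (R : realFieldType) (lam eps : R) (d d' : nat) (b : bool) :
  score lam eps d d' b =
    score_lin d'%:R (d%:R - d'%:R) (b : nat)%:R (rho1 lam eps d%:R) (rho3 lam eps d%:R)
      (rho4 lam eps d%:R) (rho5 lam eps d%:R) (rho7 lam eps d%:R)
  + score_quad d'%:R (d%:R - d'%:R) (b : nat)%:R (rho2 lam eps d%:R) (rho4 lam eps d%:R)
      (rho5 lam eps d%:R) (rho6 lam eps d%:R).
Proof. by rewrite /score /score_lin /score_quad !addrA. Qed.

Section Homogeneity.
Variables (R : realFieldType) (u x t b : R).
Hypothesis u_ge0 : 0 <= u.

Lemma score_linZ r1 r3 r4 r5 r7 :
  score_lin x t b (u * r1) (u * r3) (u * r4) (u * r5) (u * r7)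
  = u * score_lin x t b r1 r3 r4 r5 r7.
Proof.
rewrite /score_lin !mulrDr; congr (_ + _ + _ + _);
  by rewrite [RHS]mulrCA -[u * phi _]phiZ //; congr (_ * phi _); ring.
Qed.

Lemma score_quadZ r2 r4 r5 r6 :
  score_quad x t b (u * r2) (u * r4) (u * r5) (u * r6) = u * score_quad x t b r2 r4 r5 r6.
Proof.
rewrite /score_quad !mulrDr; congr (_ + _ + _ + _);
  by rewrite [RHS]mulrCA -[u * phi _]phiZ //; congr (_ * phi _); ring.
Qed.

End Homogeneity.

Section NonpositiveCoefficients.
Variables (R : realFieldType) (x t b r1 r2 r3 r4 r5 r6 r7 : R).

Lemma score_lin_eq0 : is_natr x -> 0 <= b ->
  r1 <= 0 -> r3 <= 0 -> r4 <= 0 -> r5 <= 0 -> r7 <= 0 ->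
  score_lin x t b r1 r3 r4 r5 r7 = 0.
Proof.
move=> /is_natr_cases x_nat *.
have [-> | x_ge1] : x = 0 \/ 1 <= x by case: x_nat => [|->|]; [left | right | right; lra].
  by rewrite /score_lin !mul0r !add0r !ler0_phi ?mulr0 ?addr0 //; nra.
by rewrite /score_lin !ler0_phi ?mulr0 ?addr0 //; nra.
Qed.

Lemma score_quad_eq0 : is_natr x -> 0 <= b ->
  r2 <= 0 -> r4 <= 0 -> r5 <= 0 -> r6 <= 0 ->
  score_quad x t b r2 r4 r5 r6 = 0.
Proof.
move=> /is_natr_cases x_nat *; rewrite /score_quad.
case: x_nat => [-> | -> | x_ge2]; rewrite ?(subrr, mul0r, mulr0, mul1r, add0r);
  by rewrite !ler0_phi ?mulr0 ?addr0 //; nra.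
Qed.

End NonpositiveCoefficients.

Section NonnegativeCoefficients.
Variables (R : realFieldType) (x t r1 r2 r3 r4 r5 r6 r7 : R).

Lemma score_lin_le1 b : 0 <= x -> 0 <= t -> b <= 1 ->
  0 <= r3 -> 0 <= r7 ->
  score_lin x t b r1 r3 r4 r5 r7 <= score_lin x t 1 r1 r3 r4 r5 r7.
Proof.
move=> x_ge0 t_ge0 b_le1 r3_ge0 r7_ge0.
by rewrite /score_lin !mul1r !lerD ?ler_wpM2l_phi // !lerD2r ler_piMl.
Qed.

Lemma score_quad_le1 b : is_natr x -> is_natr t -> b <= 1 -> 0 <= r4 ->
  score_quad x t b r2 r4 r5 r6 <= score_quad x t 1 r2 r4 r5 r6.
Proof.
move=> x_nat t_nat b_le1 r4_ge0.
have xt_ge0 : 0 <= x * t by rewrite mulr_ge0 ?is_natr_ge0.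
have br4_le : b * r4 <= r4 by rewrite ler_piMl.
by rewrite /score_quad mul1r !lerD ?ler_wpM2l_phi ?is_natr_mulrB1_ge0 // !lerD2r.
Qed.

Lemma score_lin1_split : 0 <= x -> 0 <= t ->
  0 <= r7 -> 0 <= r4 -> r4 <= r3 -> 0 <= r5 -> r5 <= r1 ->
  score_lin x t 1 r1 r3 r4 r5 r7 + t * ((x + t - 1) * (r4 + r5) + r1 + r3)
  = score_lin (x + t) 0 1 r1 r3 r4 r5 r7.
Proof.
move=> *; rewrite /score_lin !mul1r !ger0_phi; first ring.
all: nra.
Qed.

Lemma score_quad1_le : is_natr x -> is_natr t -> r6 <= r5 ->
  score_quad x t 1 r2 r4 r5 r6
  <= (x + t - 1) * (x * phi (r4 + r2 + r5 + (x - 2) * r6) + t * phi (r4 + r5 + (x - 1) * r6)).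
Proof.
move=> x_nat t_nat r65.
have xt_ge0 : 0 <= x * t by rewrite mulr_ge0 ?is_natr_ge0.
set S5 := r4 + r2 + r5 + (x - 2) * r6; set S7 := r4 + r5 + (x - 1) * r6.
rewrite (_ : (x + t - 1) * _ = x * (x - 1) * phi S5 + x * t * phi S5
                               + x * t * phi S7 + t * (t - 1) * phi S7); last by ring.
by rewrite /score_quad !mul1r !lerD ?ler_wpM2l_phi ?is_natr_mulrB1_ge0 // /S5 /S7; lra.
Qed.

End NonnegativeCoefficients.

(* One hypothesis per sign pattern of the two phi arguments. *)
Lemma quad_phi_sum_le (R : realFieldType) (d x t T r1 r2 r3 r4 r5 r6 : R) :
  x + t = d -> 0 <= x -> 0 <= t -> 1 <= d -> T = r4 + r2 + r5 + (d - 2) * r6 -> 0 <= T ->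
  0 <= (d - 1) * (r4 + r5) + r1 + r3 ->
  0 <= (d - 1) * (T + r6) + r1 + r3 ->
  0 <= (d - 1) * (T + d * r6 + r4 + r5) + r1 + r3 ->
  0 <= (d - 1) * (r4 + r5 + r2 - r6) + r1 + r3 ->
  (d - 1) * (x * phi (r4 + r2 + r5 + (x - 2) * r6) + t * phi (r4 + r5 + (x - 1) * r6))
  <= d * (d - 1) * T + t * ((d - 1) * (r4 + r5) + r1 + r3).
Proof.
move=> <- x_ge0 t_ge0 d_ge1 TE T_ge0 K_ge0 case_pp case_pn case_np; rewrite -subr_ge0.
set K := _ + r1 + r3 in K_ge0 *.
have dd_ge0 : 0 <= (x + t) * (x + t - 1) by rewrite mulr_ge0 //; lra.
case: (lerP 0 (r4 + r2 + r5 + (x - 2) * r6)) => [S5_ge0 | /ltW S5_le0];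
  case: (lerP 0 (r4 + r5 + (x - 1) * r6)) => [S7_ge0 | /ltW S7_le0];
  rewrite ?(ger0_phi S5_ge0) ?(ler0_phi S5_le0) ?(ger0_phi S7_ge0) ?(ler0_phi S7_le0).
- rewrite (_ : _ - _ = t * ((x + t - 1) * (T + r6) + r1 + r3)); first exact: mulr_ge0.
  by rewrite TE /K; ring.
- rewrite (_ : _ - _ = t * (K + (x + t - 1) * (T + x * r6))); last by rewrite TE /K; ring.
  apply: mulr_ge0 => //; rewrite -(@pmulr_rge0 _ (x + t)); last lra.
  rewrite (_ : (x + t) * _ = t * (K + (x + t - 1) * T)
                     + x * ((x + t - 1) * (T + (x + t) * r6 + r4 + r5) + r1 + r3)).
    by apply: addr_ge0; apply: mulr_ge0 => //; apply: addr_ge0 => //; apply: mulr_ge0; lra.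
  by rewrite /K; ring.
- rewrite (_ : _ - _ = (x + t) * (x + t - 1) * T
                      - t * (x + t - 1) * (r4 + r2 + r5 + (x - 2) * r6)
                      + t * ((x + t - 1) * (r4 + r5 + r2 - r6) + r1 + r3)).
    apply: addr_ge0; last exact: mulr_ge0.
    rewrite subr_ge0 (le_trans _ (mulr_ge0 dd_ge0 T_ge0)) // mulr_ge0_le0 // mulr_ge0 //; lra.
  by rewrite TE /K; ring.
- by rewrite !mulr0 addr0 mulr0 subr0; apply: addr_ge0; apply: mulr_ge0.
Qed.

Section FullParticipation.
Variables (R : realFieldType) (d r1 r2 r3 r4 r5 r6 r7 : R).

Record full_optimal : Prop := FullOptimal {
  fo_r7_ge0 : 0 <= r7;
  fo_r4_ge0 : 0 <= r4;
  fo_r4_le_r3 : r4 <= r3;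
  fo_r5_ge0 : 0 <= r5;
  fo_r5_le_r1 : r5 <= r1;
  fo_r6_le_r5 : r6 <= r5;
  fo_s5_ge0 : 0 <= r4 + r2 + r5 + (d - 2) * r6;
  fo_case_pp : 0 <= (d - 1) * (r4 + r2 + r5 + (d - 2) * r6 + r6) + r1 + r3;
  fo_case_pn : 0 <= (d - 1) * (r4 + r2 + r5 + (d - 2) * r6 + d * r6 + r4 + r5) + r1 + r3;
  fo_case_np : 0 <= r4 + r5 + r2 - r6 }.

Lemma score_le_full x t b : x + t = d -> is_natr x -> is_natr t -> 1 <= d -> b <= 1 ->
  full_optimal ->
  score_lin x t b r1 r3 r4 r5 r7 + score_quad x t b r2 r4 r5 r6
  <= score_lin d 0 1 r1 r3 r4 r5 r7 + score_quad d 0 1 r2 r4 r5 r6.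
Proof.
move=> dE x_nat t_nat d_ge1 b_le1.
case=> r7_ge0 r4_ge0 r43 r5_ge0 r51 r65 s5_ge0 case_pp case_pn case_np.
have [x_ge0 t_ge0] := (is_natr_ge0 x_nat, is_natr_ge0 t_nat).
have r3_ge0 : 0 <= r3 := le_trans r4_ge0 r43.
have K_ge0 : 0 <= (d - 1) * (r4 + r5) + r1 + r3 by rewrite -!addrA addr_ge0 ?mulr_ge0; lra.
have -> : score_quad d 0 1 r2 r4 r5 r6 = d * (d - 1) * (r4 + r2 + r5 + (d - 2) * r6).
  by rewrite /score_quad mul1r ger0_phi // !(mulr0, mul0r, addr0).
have lin_le := score_lin_le1 r1 r4 r5 x_ge0 t_ge0 b_le1 r3_ge0 r7_ge0.
have quad_le := score_quad_le1 r2 r5 r6 x_nat t_nat b_le1 r4_ge0.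
apply: le_trans (lerD lin_le quad_le) _.
rewrite -dE -(score_lin1_split x_ge0 t_ge0 r7_ge0 r4_ge0 r43 r5_ge0 r51) dE.
rewrite -[X in _ <= X]addrA lerD2l addrC.
apply: le_trans (score_quad1_le r2 r4 x_nat t_nat r65) _; rewrite dE.
apply: quad_phi_sum_le => //.
have : 0 <= (d - 1) * (r4 + r5 + r2 - r6) by rewrite mulr_ge0 //; lra.
lra.
Qed.

End FullParticipation.

Definition horner3 (R : realFieldType) (D a0 a1 a2 a3 : R) :=
  a0 + D * (a1 + D * (a2 + D * a3)).

Lemma horner3_ge0 (R : realFieldType) (D a0 a1 a2 a3 : R) :
  0 <= D -> 0 <= a0 -> 0 <= a1 -> 0 <= a2 -> 0 <= a3 -> 0 <= horner3 D a0 a1 a2 a3.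
Proof. by move=> *; rewrite /horner3 !(addr_ge0, mulr_ge0). Qed.

Lemma ge0_conic (R : realFieldType) (c p q P Q g : R) :
  0 < c -> 0 <= p -> 0 <= q -> 0 <= P -> 0 <= Q -> c * g = p * P + q * Q -> 0 <= g.
Proof.
move=> c_gt0 p_ge0 q_ge0 P_ge0 Q_ge0 cgE.
by rewrite -(pmulr_rge0 _ c_gt0) cgE addr_ge0 ?mulr_ge0.
Qed.

(* [lam + lam ^+ 2 * (dR - 2) / 4] is the value of [rho4] at [eps = 0]. *)
Lemma rho4_certificate (R : realFieldType) (lam eps dR a0 a1 a2 a3 b0 b1 b2 b3 g : R) :
  0 < lam -> lam < 1 -> 0 <= eps -> 1 <= dR -> 0 <= rho4 lam eps dR ->
  (lam + lam ^+ 2 * (dR - 2) / 4) * g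
    = rho4 lam eps dR * horner3 (dR - 1) a0 a1 a2 a3 + eps * horner3 (dR - 1) b0 b1 b2 b3 ->
  0 <= a0 -> 0 <= a1 -> 0 <= a2 -> 0 <= a3 -> 0 <= b0 -> 0 <= b1 -> 0 <= b2 -> 0 <= b3 ->
  0 <= g.
Proof.
move=> lam_gt0 lam_lt1 eps_ge0 dR_ge1.
have c_gt0 : 0 < lam + lam ^+ 2 * (dR - 2) / 4.
  have : 0 <= lam ^+ 2 * (dR - 1) by rewrite mulr_ge0 ?sqr_ge0 // subr_ge0.
  nra.
move=> rho4_ge0 cgE *.
by apply: (ge0_conic c_gt0 rho4_ge0 eps_ge0 _ _ cgE); apply: horner3_ge0; rewrite ?subr_ge0.
Qed.

Lemma rho_full_optimal (R : realFieldType) (lam eps dR : R) :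
  0 < lam -> lam < 1 -> 0 <= eps -> 1 <= dR -> 0 <= rho4 lam eps dR ->
  full_optimal dR (rho1 lam eps dR) (rho2 lam eps dR) (rho3 lam eps dR) (rho4 lam eps dR)
    (rho5 lam eps dR) (rho6 lam eps dR) (rho7 lam eps dR).
Proof.
move=> lam_gt0 lam_lt1 eps_ge0 dR_ge1 rho4_ge0.
have cert a0 a1 a2 a3 b0 b1 b2 b3 g := @rho4_certificate R lam eps dR a0 a1 a2 a3 b0 b1 b2 b3 g
  lam_gt0 lam_lt1 eps_ge0 dR_ge1 rho4_ge0.
pose c2 := (1 - lam / 2) ^+ 2; have c2_ge0 : 0 <= c2 by rewrite sqr_ge0.
constructor; [idtac | exact: rho4_ge0 | idtac ..]; clear -cert lam_gt0 lam_lt1 c2_ge0.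
- apply: (cert 1 (lam / 2) 0 0 c2 0 0 0);
    [by rewrite /horner3 /rho4 /rho7 /c2; field | nra ..].
- rewrite -subr_ge0; apply: (cert c2 0 0 0 c2 (lam / 2 * c2) 0 0);
    [by rewrite /horner3 /rho3 /rho4 /c2; field | nra ..].
- apply: (cert (lam / 2 + lam ^+ 2 / 4 - lam ^+ 3 / 8) (lam ^+ 3 / 8) 0 0
                (lam / 2 * (1 - lam / 2) ^+ 3) (lam ^+ 2 / 4 * c2) 0 0);
    [by rewrite /horner3 /rho4 /rho5 /c2; field | nra ..].
- rewrite -subr_ge0; apply: (cert ((1 - lam / 2) * (1 - lam ^+ 2 / 4)) (lam ^+ 3 / 24) 0 0
      (c2 * (1 - lam / 2 + lam ^+ 2 / 4)) (lam / 2 - lam ^+ 2 / 2 + lam ^+ 3 / 12 + lam ^+ 4 / 48)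
      0 0);
    [by rewrite /horner3 /rho1 /rho4 /rho5 /c2; field | nra ..].
- rewrite -subr_ge0; apply: (cert (lam / 2 * c2) 0 0 0 (lam / 2 * c2) (lam ^+ 2 / 4 * c2) 0 0);
    [by rewrite /horner3 /rho4 /rho5 /rho6 /c2; field | nra ..].
- apply: (cert (2 * lam - 5 / 12 * lam ^+ 2 - lam ^+ 3 / 24) (lam ^+ 2 - lam ^+ 3 / 12)
                (lam ^+ 3 / 8) 0 (lam ^+ 2 / 12 - lam ^+ 3 / 24) 0 0 0);
    [by rewrite /horner3 /rho2 /rho4 /rho5 /rho6 /c2; field | nra ..].
- apply: (cert 2 (2 * lam + 7 / 12 * lam ^+ 2 - lam ^+ 3 / 8) (lam ^+ 2 + lam ^+ 3 / 24)
                (lam ^+ 3 / 8) (2 * c2) (lam - 11 / 12 * lam ^+ 2 + lam ^+ 3 / 6 + lam ^+ 4 / 48)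
                0 0);
    [by rewrite /horner3 /rho1 /rho2 /rho3 /rho4 /rho5 /rho6 /c2; field | nra ..].
- apply: (cert 2 (7 / 2 * lam + 7 / 12 * lam ^+ 2 - lam ^+ 3 / 4) (2 * lam ^+ 2 - lam ^+ 3 / 12)
                (lam ^+ 3 / 4) (2 * c2)
                (3 / 2 * lam - 5 / 3 * lam ^+ 2 + 13 / 24 * lam ^+ 3 - lam ^+ 4 / 24) 0 0);
    [by rewrite /horner3 /rho1 /rho2 /rho3 /rho4 /rho5 /rho6 /c2; field | nra ..].
- apply: (cert (2 * lam - 5 / 12 * lam ^+ 2 - lam ^+ 3 / 24) (lam ^+ 2 / 4 + lam ^+ 3 / 6) 0 0
                (lam ^+ 2 / 12 - lam ^+ 3 / 24) (lam ^+ 2 / 4 * c2) 0 0);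
    [by rewrite /horner3 /rho2 /rho4 /rho5 /rho6 /c2; field | nra ..].
Qed.

(* At the critical eps the coefficients are (eps - lam / 2) times these, where
   c = 1 - lam / 2 and k = 1 - lam ^+ 2 / 3. *)
Definition crit_score (R : realFieldType) (d l c k x t b : R) :=
  score_lin x t b ((d - 1) * k) ((d - 1) * c) (- c) ((d - 2) * l * c / 2) 0
  + score_quad x t b (- k) (- c) ((d - 2) * l * c / 2) (- (l * c)).

Section CriticalCoefficients.
Variables (R : realFieldType) (d x t b l c k : R).

Lemma crit_lin_le : x + t = d -> 0 <= x -> 0 <= t -> b <= 1 ->
  0 <= l -> 0 <= c -> l * c <= k -> 2 <= d ->
  score_lin x t b ((d - 1) * k) ((d - 1) * c) (- c) ((d - 2) * l * c / 2) 0
  + t * ((d - 1) * k + (d - 1) * (d - 2) * l * c / 2 - x * c)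
  <= score_lin d 0 1 ((d - 1) * k) ((d - 1) * c) (- c) ((d - 2) * l * c / 2) 0.
Proof.
move=> dE x_ge0 t_ge0 b_le1 l_ge0 c_ge0 lc_le_k d_ge2.
set r5 := (d - 2) * l * c / 2.
have r5_ge0 : 0 <= r5 by rewrite /r5 divr_ge0 ?mulr_ge0 //; lra.
have k_ge0 : 0 <= k by apply: le_trans lc_le_k; rewrite mulr_ge0.
have r5_le_r1 : r5 <= (d - 1) * k by rewrite /r5; nra.
have s3_ge0 : 0 <= (d - 1) * c + (d - 1) * k + (x - 1) * r5 by nra.
have s4_ge0 : 0 <= (d - 1) * c + x * r5 by nra.
have -> : score_lin d 0 1 ((d - 1) * k) ((d - 1) * c) (- c) r5 0
          = d * ((d - 1) * c + (d - 1) * k + (d - 1) * r5).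
  rewrite /score_lin !(mul1r, mulr0, mul0r, add0r, addr0) mulrN subrr.
  by rewrite (ler0_phi (lexx 0)) mulr0 add0r ger0_phi //; nra.
rewrite -[leRHS](_ : x * (c * t) + x * ((d - 1) * c + (d - 1) * k + (x - 1) * r5)
                     + t * ((d - 1) * c + x * r5)
                     + t * ((d - 1) * k + (d - 1) * (d - 2) * l * c / 2 - x * c) = _);
  last by rewrite /r5 -dE; ring.
have s1E : b * 0 + (d - 1) * c + (x - 1) * - c = c * t by rewrite -dE; ring.
have s2_le0 : b * 0 + x * - c <= 0 by rewrite mulr0 add0r mulrN oppr_le0 mulr_ge0.
rewrite /score_lin s1E (ger0_phi (mulr_ge0 c_ge0 t_ge0)) (ler0_phi s2_le0) mulr0 addr0.
rewrite lerD2r lerD ?lerD2l //.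
  rewrite -[X in _ <= x * X]ger0_phi //; apply: ler_wpM2l_phi => //.
  by rewrite !lerD2r ler_piMl // mulr_ge0 //; lra.
rewrite -[X in _ <= t * X]ger0_phi //; apply: ler_wpM2l_phi => //.
by rewrite lerD2r ler_piMl // mulr_ge0 //; lra.
Qed.

Lemma natr_mul_phi_le : is_natr x -> is_natr t -> 2 <= x + t ->
  x * phi (t - x) <= t * (x + t - 2).
Proof.
move=> x_nat t_nat d_ge2; have x_ge0 := is_natr_ge0 x_nat.
case: (lerP (t - x) 0) => [tx_le0 | tx_gt0].
  by rewrite ler0_phi // mulr0 mulr_ge0 ?(is_natr_ge0 t_nat) //; lra.
rewrite ger0_phi; last lra.
by case: (is_natr_cases t_nat) => [t0|t1|t_ge2]; rewrite ?t0 ?t1; nra.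
Qed.

Lemma crit_quad_le : x + t = d -> is_natr x -> is_natr t -> 0 <= b ->
  0 <= l -> 0 <= c -> l * c <= k -> 2 <= d ->
  score_quad x t b (- k) (- c) ((d - 2) * l * c / 2) (- (l * c))
  <= t * ((d - 1) * (d - 2) * l * c / 2).
Proof.
move=> dE x_nat t_nat b_ge0 l_ge0 c_ge0 lc_le_k d_ge2.
have [x_ge0 t_ge0] := (is_natr_ge0 x_nat, is_natr_ge0 t_nat).
have lc_ge0 : 0 <= l * c by rewrite mulr_ge0.
have xt_ge0 : 0 <= x * t by rewrite mulr_ge0.
set S7 := l * c / 2 * (t - x).
have s5_le : b * - c + - k + (d - 2) * l * c / 2 + (x - 2) * - (l * c) <= S7.
  by rewrite /S7 -dE; nra.
have s6_le0 : b * - c + - k + (x - 1) * - (l * c) <= 0 by nra.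
have s7_le : b * - c + (d - 2) * l * c / 2 + (x - 1) * - (l * c) <= S7.
  by rewrite /S7 -dE; nra.
have s8_le0 : b * - c + x * - (l * c) <= 0 by nra.
apply: (@le_trans _ _ (x * (d - 1) * phi S7)).
  rewrite /score_quad (ler0_phi s6_le0) (ler0_phi s8_le0) !mulr0 !addr0.
  rewrite (_ : x * (d - 1) * phi S7 = x * (x - 1) * phi S7 + x * t * phi S7);
    last by rewrite -dE; ring.
  by rewrite lerD ?ler_wpM2l_phi ?is_natr_mulrB1_ge0.
rewrite /S7 phiZ ?divr_ge0 // -dE.
rewrite (_ : _ * _ = (x + t - 1) * (l * c / 2) * (x * phi (t - x))); last by ring.
rewrite (_ : t * _ = (x + t - 1) * (l * c / 2) * (t * (x + t - 2))); last by ring.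
by rewrite ler_wpM2l ?natr_mul_phi_le ?dE // mulr_ge0 ?divr_ge0 //; lra.
Qed.

Lemma crit_score_le_full : x + t = d -> is_natr x -> is_natr t -> 0 <= b -> b <= 1 ->
  0 <= l -> 0 <= c -> l * c <= k -> c <= k -> 2 <= d ->
  crit_score d l c k x t b <= crit_score d l c k d 0 1.
Proof.
move=> dE x_nat t_nat b_ge0 b_le1 l_ge0 c_ge0 lc_le_k c_le_k d_ge2.
have [x_ge0 t_ge0] := (is_natr_ge0 x_nat, is_natr_ge0 t_nat).
have lin_le := crit_lin_le dE x_ge0 t_ge0 b_le1 l_ge0 c_ge0 lc_le_k d_ge2.
have quad_le := crit_quad_le dE x_nat t_nat b_ge0 l_ge0 c_ge0 lc_le_k d_ge2.
have quad_full_ge0 : 0 <= score_quad d 0 1 (- k) (- c) ((d - 2) * l * c / 2) (- (l * c)).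
  rewrite /score_quad !(mulr0, mul0r, addr0) mulr_ge0 ?phi_ge0 // mulr_ge0; lra.
have xc_le : t * (x * c) <= t * ((d - 1) * k).
  case: (is_natr_cases t_nat) => [-> | t1 | t_ge2];
    [by rewrite !mul0r | by apply: ler_wpM2l => //; nra ..].
rewrite (_ : t * _ = t * ((d - 1) * k) + t * ((d - 1) * (d - 2) * l * c / 2) - t * (x * c))
  in lin_le; last by ring.
rewrite /crit_score; lra.
Qed.

End CriticalCoefficients.

Section Regimes.
Variables (R : realFieldType) (lam eps : R).

Lemma rho4_ge0_small_eps (dR : R) : 0 < lam -> 1 <= dR ->
  eps <= lam * (lam * (dR - 2) + 4) / (2 * (lam * (dR - 1) + 2)) -> 0 <= rho4 lam eps dR.
Proof.
move=> lam_gt0 dR_ge1; have den_gt0 : 0 < 2 * (lam * (dR - 1) + 2) by nra.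
rewrite ler_pdivlMr // => eps_le.
rewrite (_ : rho4 _ _ _ = (lam * (lam * (dR - 2) + 4) - eps * (2 * (lam * (dR - 1) + 2))) / 4).
  by rewrite divr_ge0 // subr_ge0.
by rewrite /rho4; field.
Qed.

Lemma rho1_le0_large_eps (dR : R) : 1 <= dR ->
  lam / 2 + 3 / 2 * ((2 - lam) / (lam ^+ 2 * (dR - 1) + 3)) <= eps -> rho1 lam eps dR <= 0.
Proof.
move=> dR_ge1 eps_ge.
have den_gt0 : 0 < lam ^+ 2 * (dR - 1) + 3.
  by rewrite ltr_pwDr // mulr_ge0 ?sqr_ge0 // subr_ge0.
have : 3 / 2 * (2 - lam) <= (eps - lam / 2) * (lam ^+ 2 * (dR - 1) + 3).
  by rewrite -ler_pdivrMr // -mulrA; lra.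
have -> : rho1 lam eps dR = (3 / 2 * (2 - lam) - (eps - lam / 2) * (lam ^+ 2 * (dR - 1) + 3)) / 3.
  by rewrite /rho1; field.
by rewrite pmulr_lle0 // ?invr_gt0; lra.
Qed.

Lemma score_eq0_large_eps (d d' : nat) (b : bool) : 0 < lam -> lam < 1 -> (0 < d)%N ->
  lam / 2 + 3 / 2 * ((2 - lam) / (lam ^+ 2 * (d%:R - 1) + 3)) <= eps ->
  score lam eps d d' b = 0.
Proof.
move=> lam_gt0 lam_lt1 d_gt0 eps_ge; set dR : R := d%:R.
have dR_ge1 : 1 <= dR by rewrite ler1n.
have D_ge0 : 0 <= dR - 1 by rewrite subr_ge0.
have den_gt0 : 0 < lam ^+ 2 * (dR - 1) + 3 by rewrite ltr_pwDr // mulr_ge0 ?sqr_ge0.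
set em := lam / 2 - eps.
have em_lt0 : em < 0.
  suff : 0 < 3 / 2 * ((2 - lam) / (lam ^+ 2 * (dR - 1) + 3)) by rewrite /em; lra.
  by rewrite mulr_gt0 ?divr_gt0 //; lra.
have rho1_le0 := rho1_le0_large_eps dR_ge1 eps_ge.
have Dem_le0 : (dR - 1) * em <= 0 by nra.
have rho3_le0 : rho3 lam eps dR <= 0.
  rewrite (_ : rho3 _ _ _ = rho1 lam eps dR + (dR - 1) * em * (lam / 2 - lam ^+ 2 / 3)).
    have : 0 <= lam / 2 - lam ^+ 2 / 3 by nra.
    nra.
  by rewrite /rho3 /rho1 /em; field.
have rho7_le0 : rho7 lam eps dR <= 0.
  rewrite (_ : rho7 _ _ _ = rho3 lam eps dR + (dR - 1) * em * (1 - lam / 2)); first nra.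
  by rewrite /rho7 /rho3 /em; field.
have rho4_le0 : rho4 lam eps dR <= 0.
  rewrite (_ : rho4 _ _ _ = lam / 2 * rho7 lam eps dR + (1 - lam / 2) * em); first nra.
  by rewrite /rho4 /rho7 /em; field.
have rho5_le0 : rho5 lam eps dR <= 0.
  rewrite (_ : rho5 _ _ _ = lam / 2 * (rho3 lam eps dR + (1 - lam / 2) * em)).
    by rewrite pmulr_rle0 ?divr_gt0 //; nra.
  by rewrite /rho5 /rho3 /em; field.
have rho6_le0 : rho6 lam eps dR <= 0.
  have : 0 <= lam / 2 - lam ^+ 2 / 4 by nra.
  rewrite (_ : rho6 _ _ _ = lam / 2 * rho4 lam eps dR + em * (lam / 2 - lam ^+ 2 / 4)); first nra.
  by rewrite /rho6 /rho4 /em; field.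
have rho2_le0 : rho2 lam eps dR <= 0.
  have : 0 <= 1 - lam ^+ 2 / 3 by nra.
  rewrite (_ : rho2 _ _ _ = lam ^+ 2 / 3 * rho7 lam eps dR + em * (1 - lam ^+ 2 / 3)); first nra.
  by rewrite /rho2 /rho7 /em; field.
have b_ge0 : 0 <= (b : nat)%:R :> R by apply: ler0n.
by rewrite scoreE score_lin_eq0 ?score_quad_eq0 ?addr0 //; exists d'.
Qed.

Lemma score_critical (d d' : nat) (b : bool) : lam < 1 -> (0 < d)%N ->
  eps = (lam * (d%:R - 1) + 2) / (2 * d%:R) ->
  score lam eps d d' b = (eps - lam / 2) * crit_score d%:R lam (1 - lam / 2) (1 - lam ^+ 2 / 3)
                                           d'%:R (d%:R - d'%:R) (b : nat)%:R.
Proof.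
move=> lam_lt1 d_gt0 epsE; set dR : R := d%:R; set u := eps - lam / 2.
have dR_gt0 : 0 < dR by rewrite ltr0n.
have epsE' : 1 - eps = (dR - 1) * u.
  by rewrite /u epsE; field; rewrite pnatr_eq0 -lt0n.
have emE : lam / 2 - eps = - u by rewrite /u opprB.
have u_ge0 : 0 <= u.
  by rewrite -(pmulr_rge0 _ dR_gt0) (_ : dR * u = 1 - lam / 2); [lra | lra].
rewrite scoreE /crit_score mulrDr -score_linZ // -score_quadZ //.
by congr (score_lin _ _ _ _ _ _ _ _ + score_quad _ _ _ _ _ _ _);
  rewrite /rho1 /rho2 /rho3 /rho4 /rho5 /rho6 /rho7 epsE' emE; field.
Qed.

End Regimes.

Lemma is_natr_subn (R : realFieldType) (m n : nat) : (m <= n)%N -> is_natr (n%:R - m%:R : R).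
Proof. by move=> le_mn; exists (n - m)%N; rewrite natrB. Qed.

Lemma natr_bool_le1 (R : realFieldType) (b : bool) : ((b : nat)%:R : R) <= 1.
Proof. by case: b; rewrite ?ler01. Qed.

Lemma score_d0 (R : realFieldType) (lam eps : R) (b : bool) : score lam eps 0 0 b = 0.
Proof. by rewrite /score; ring. Qed.

Theorem lemmaD2 (R : realFieldType) (d : nat) (lam eps : R) :
  0 < lam -> lam < 1 -> 0 <= eps -> eps < 1 ->
  [/\ (eps <= lam * (lam * (d%:R - 2) + 4) / (2 * (lam * (d%:R - 1) + 2)) ->
         is_global_maximizer lam eps d d true),
      (eps = (lam * (d%:R - 1) + 2) / (2 * d%:R) ->
         is_global_maximizer lam eps d d true) &
      (lam / 2 + 3 / 2 * ((2 - lam) / (lam ^+ 2 * (d%:R - 1) + 3)) <= eps ->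
         is_global_maximizer lam eps d 0 false)].
Proof.
move=> lam_gt0 lam_lt1 eps_ge0 eps_lt1.
case: d => [|d].
  by split=> _; split=> // d' b; rewrite leqn0 => /eqP ->; rewrite !score_d0.
have dR_ge1 : 1 <= d.+1%:R :> R by rewrite ler1n.
have splitP d' : (d' <= d.+1)%N ->
    [/\ d'%:R + (d.+1%:R - d'%:R) = d.+1%:R :> R, is_natr (d'%:R : R)
       & is_natr (d.+1%:R - d'%:R : R)].
  by move=> le_d'd; split; [rewrite addrC subrK | exists d' | apply: is_natr_subn].
split=> [eps_small | epsE | eps_large]; split=> // d' b /splitP[dE x_nat t_nat].
- rewrite !scoreE subrr; apply: score_le_full => //; first exact: natr_bool_le1.
  by apply: rho_full_optimal => //; apply: rho4_ge0_small_eps.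
- have d_ge2 : 2 <= d.+1%:R :> R.
    case: (posnP d) => [d0 | d_gt0]; last by rewrite ler_nat ltnS.
    by move: eps_lt1; rewrite epsE d0; lra.
  have u_ge0 : 0 <= eps - lam / 2.
    rewrite epsE (_ : _ - _ = (2 - lam) / (2 * d.+1%:R)); first by rewrite divr_ge0 //; lra.
    by field; rewrite addrC natr1 pnatr_eq0.
  rewrite !score_critical // subrr ler_wpM2l //.
  by apply: crit_score_le_full => //; [exact: natr_bool_le1 | nra ..].
by rewrite !score_eq0_large_eps.
Qed.
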